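(* Assume every $(\sigma,\delta)$-conjugacy class of $K$ is $(\sigma,\delta)$-algebraic. Then for every irreducible $P(T)\in K[T;\sigma,\delta]$ of degree $>1$, the skew rational function $P(T)^{-1}$ is defined at every $a\in K$.
   Context: Let $K$ be a skew field, $K^*=K\setminus\{0\}$, $\sigma\colon K\to K$ a ring endomorphism and $\delta\colon K\to K$ a $\sigma$-derivation. $K[T;\sigma,\delta]$ is the skew polynomial ring with $Ta=\sigma(a)T+\delta(a)$. The $(\sigma,\delta)$-action of $K^*$ on $K$ is ${}^{b}a=\sigma(b)ab^{-1}+\delta(b)b^{-1}$; $\Delta(a)=\{{}^{b}a:b\in K^*\}$ is the $(\sigma,\delta)$-conjugacy class of $a$. For $P\in K[T;\sigma,\delta]$ and $a\in K$, $P(a)$ is the unique element of $K$ with $P(T)-P(a)\in K[T;\sigma,\delta](T-a)$. A conjugacy class $\Delta(a)$ is $(\sigma,\delta)$-algebraic if there is a nonzero $P\in K[T;\sigma,\delta]$ with $P(c)=0$ for all $c\in\Delta(a)$. For a set $Z$ with a $K^*$-action, the skew product of functions $Z\to K$ is $(f\diamond g)(z)=f({}^{g(z)}z)g(z)$ if $g(z)\neq0$, $0$ otherwise; $f$ is skew invertible if some $g$ satisfies $f\diamond g=g\diamond f=1$. $K(T;\sigma,\delta)$ is the division ring of left fractions of $K[T;\sigma,\delta]$; each $f$ has a unique minimal representation $P(T)^{-1}Q(T)$ with $P$ monic of least degree; $f$ is defined at $a$ if the function $\Delta(a)\to K$, $c\mapsto P(c)$, is skew invertible. *)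

(* Skew polynomial ring K[T;sigma,delta] over a skew field K,
   built on the additive structure of {poly K} (coefficient lists) with an
   explicitly defined skew multiplication.  NEVER use the ordinary product of
   {poly K} for skew polynomials: use [skew_mul]. *)
From HB Require Import structures.
From mathcomp Require Import all_boot all_order all_algebra.
From Stdlib Require Import ClassicalEpsilon.
Set Implicit Arguments. Unset Strict Implicit. Unset Printing Implicit Defensive.
Import Order.TTheory GRing.Theory.
Local Open Scope ring_scope.

Definition skew_field (K : unitRingType) : Prop :=
  forall x : K, x != 0 -> x \is a GRing.unit.

(* delta is a sigma-derivation: additive, delta(ab) = sigma(a) delta(b) + delta(a) b,
   matching T a = sigma(a) T + delta(a). *)
Definition sigma_derivation (K : unitRingType) (sigma delta : K -> K) : Prop :=
  (forall x y, delta (x + y) = delta x + delta y) /\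
  (forall x y, delta (x * y) = sigma x * delta y + delta x * y).

Section Skew.
Variables (K : unitRingType) (sigma delta : K -> K).

(* left multiplication by T:  T * (sum a_i T^i) = sum (sigma(a_i) T^(i+1) + delta(a_i) T^i) *)
Definition mulT (q : {poly K}) : {poly K} :=
  map_poly sigma q * 'X + map_poly delta q.

Definition skew_mul (p q : {poly K}) : {poly K} :=
  \sum_(i < size p) p`_i *: iter i mulT q.

Definition skew_unit (p : {poly K}) : Prop :=
  exists v, skew_mul p v = 1 /\ skew_mul v p = 1.

Definition skew_irreducible (p : {poly K}) : Prop :=
  p != 0 /\ ~ skew_unit p /\
  forall a b, p = skew_mul a b -> skew_unit a \/ skew_unit b.

Definition skew_eval (p : {poly K}) (a : K) : K :=
  epsilon (inhabits 0)
    (fun c => exists q, p = skew_mul q ('X - a%:P) + c%:P).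

Definition sd_conj (b a : K) : K := sigma b * a * b^-1 + delta b * b^-1.

Definition conj_class (a c : K) : Prop := exists2 b : K, b != 0 & c = sd_conj b a.

Definition sd_algebraic (a : K) : Prop :=
  exists p : {poly K}, p != 0 /\ forall c, conj_class a c -> skew_eval p c = 0.

(* skew product of functions Z = Delta(a) -> K (represented by functions K -> K,
   only their values on Delta(a) matter) *)
Definition skew_prod (f g : K -> K) (z : K) : K :=
  if g z == 0 then 0 else f (sd_conj (g z) z) * g z.

Definition skew_invertible (a : K) (f : K -> K) : Prop :=
  exists g : K -> K, forall z, conj_class a z ->
    skew_prod f g z = 1 /\ skew_prod g f z = 1.

(* equality of left fractions A^-1 B = C^-1 D in K(T;sigma,delta)
   (A, C nonzero): U A = V C <> 0 and U B = V D for some U, V *)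
Definition lfrac_eq (A B C D : {poly K}) : Prop :=
  exists U V, skew_mul U A = skew_mul V C /\ skew_mul U A != 0 /\
              skew_mul U B = skew_mul V D.

Definition minimal_rep (A B P Q : {poly K}) : Prop :=
  P \is monic /\ lfrac_eq A B P Q /\
  forall P' Q', P' != 0 -> lfrac_eq A B P' Q' -> (size P <= size P')%N.

Definition defined_at (A B : {poly K}) (a : K) : Prop :=
  exists P Q, minimal_rep A B P Q /\ skew_invertible a (fun c => skew_eval P c).

End Skew.

(* Write T_a x = sigma x * a + delta x.  For b <> 0 one has P(^b a) b = P(T_a)(b), and P(T_a)
   is right linear over the (sigma,delta)-centralizer C(a) of a.  An irreducible P of degree > 1
   has no right factor T - c, so P(T_a) is injective.  Algebraicity of Delta(a) gives a nonzero G
   with G(T_a) = 0 on all of K; since the kernel of G(T_a) has right C(a)-dimension at most deg G,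
   K is finite dimensional over C(a) and P(T_a) is onto as well.  Hence z |-> ^(P(z)) z, which
   maps ^b a to ^(P(T_a) b) a, is a bijection of Delta(a) on which P does not vanish, and that is
   exactly what makes c |-> P(c) skew invertible.  The monic associate of P is the minimal
   representation of P^-1 by a degree count. *)
From Pilot Require Import Defs.
From HB Require Import structures.
From mathcomp Require Import all_boot all_order all_algebra.
From Stdlib Require Import ClassicalEpsilon Classical Lia.
From mathcomp Require Import zify.
Import GRing.Theory.
Local Open Scope ring_scope.
Set Implicit Arguments. Unset Strict Implicit. Unset Printing Implicit Defensive.

Section SkewPolynomials.
Variables (K : unitRingType) (sigma : {rmorphism K -> K}) (delta : K -> K).
Hypothesis skewK : skew_field K.
Hypothesis sderiv : sigma_derivation sigma delta.

Local Notation mulT := (mulT sigma delta).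
Local Notation "p ** q" := (skew_mul sigma delta p q) (at level 40, left associativity).

Lemma deltaD x y : delta (x + y) = delta x + delta y.
Proof. by case: sderiv. Qed.

Lemma deltaM x y : delta (x * y) = sigma x * delta y + delta x * y.
Proof. by case: sderiv. Qed.

Lemma delta0 : delta 0 = 0.
Proof. by apply: (addrI (delta 0)); rewrite -deltaD !addr0. Qed.

Lemma deltaN x : delta (- x) = - delta x.
Proof. by apply/eqP; rewrite -addr_eq0 -deltaD addNr delta0. Qed.

Lemma delta1 : delta 1 = 0.
Proof.
have := deltaM 1 1; rewrite !mulr1 rmorph1 mul1r => d11.
by apply: (addrI (delta 1)); rewrite addr0 -d11.
Qed.

Lemma unit_neq0 (x : K) : x != 0 -> x \is a GRing.unit.
Proof. exact: skewK. Qed.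

Lemma neq0_lreg (x : K) : x != 0 -> GRing.lreg x.
Proof. by move/unit_neq0/mulrI. Qed.

Lemma mul_neq0 (x y : K) : x != 0 -> y != 0 -> x * y != 0.
Proof. by move=> x0 y0; rewrite (mulrI_eq0 _ (neq0_lreg x0)). Qed.

Lemma sigma_neq0 (x : K) : x != 0 -> sigma x != 0.
Proof.
move=> x0; apply/eqP => sx0.
have : sigma x * sigma x^-1 = 1 by rewrite -rmorphM mulrV ?unit_neq0 // rmorph1.
by rewrite sx0 mul0r => /eqP; rewrite eq_sym oner_eq0.
Qed.

Lemma sigma_inj : injective sigma.
Proof.
move=> x y /eqP; rewrite -subr_eq0 -rmorphB => /eqP sxy.
by apply/eqP; rewrite -subr_eq0; apply/negP => /negP /sigma_neq0; rewrite sxy eqxx.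
Qed.

Lemma iter_sigma1 i : iter i sigma 1 = 1.
Proof. by elim: i => //= i ->; rewrite rmorph1. Qed.

Lemma coef_mulT (q : {poly K}) k :
  (mulT q)`_k = (if k == 0%N then 0 else sigma q`_k.-1) + delta q`_k.
Proof.
rewrite /Defs.mulT coefD coefMX [(map_poly delta _)`_k]coef_map_id0 ?delta0 //.
by case: (k == 0%N) => //; rewrite coef_map_id0 ?rmorph0.
Qed.

Lemma mulT0 : mulT 0 = 0.
Proof. by apply/polyP => k; rewrite coef_mulT !coef0 rmorph0 delta0 if_same addr0. Qed.

Lemma iter_mulT0 i : iter i mulT 0 = 0.
Proof. by elim: i => //= i ->; rewrite mulT0. Qed.

Lemma size_lead_mulT (q : {poly K}) : q != 0 ->
  size (mulT q) = (size q).+1 /\ lead_coef (mulT q) = sigma (lead_coef q).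
Proof.
move=> q0.
have s_sq : size (map_poly sigma q) = size q.
  by apply: size_map_inj_poly; [exact: sigma_inj | exact: rmorph0].
have sq0 : map_poly sigma q != 0 by rewrite -size_poly_eq0 s_sq size_poly_eq0.
have lt_dq : (size (map_poly delta q) < size (map_poly sigma q * 'X)%R)%N.
  by rewrite size_mulX // s_sq ltnS; apply: size_poly.
rewrite /Defs.mulT size_polyDl // lead_coefDl // size_mulX // s_sq lead_coefMX.
by split => //; apply: lead_coef_map_inj; [exact: sigma_inj | exact: rmorph0].
Qed.

Lemma size_lead_iter_mulT i (q : {poly K}) : q != 0 ->
  size (iter i mulT q) = (size q + i)%N /\
  lead_coef (iter i mulT q) = iter i sigma (lead_coef q).
Proof.
move=> q0; elim: i => [|i [IHs IHl]] /=; first by rewrite addn0.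
have nz : iter i mulT q != 0 by rewrite -size_poly_eq0 IHs addn_eq0 size_poly_eq0 (negPf q0).
by have [-> ->] := size_lead_mulT nz; rewrite IHs IHl addnS.
Qed.

Lemma skew_mul_widen n (p q : {poly K}) : (size p <= n)%N ->
  p ** q = \sum_(i < n) p`_i *: iter i mulT q.
Proof.
move=> le_pn; rewrite /skew_mul (big_ord_widen n (fun i => p`_i *: iter i mulT q) le_pn).
rewrite big_mkcond /=; apply: eq_bigr => i _.
by case: ifP => // /negbT; rewrite -leqNgt => h; rewrite nth_default // scale0r.
Qed.

Lemma skew_mulDl (p1 p2 q : {poly K}) : (p1 + p2) ** q = p1 ** q + p2 ** q.
Proof.
set n := maxn (size p1) (size p2).
rewrite (@skew_mul_widen n) ?(leq_trans (size_polyD _ _)) //.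
rewrite (@skew_mul_widen n p1) ?leq_maxl // (@skew_mul_widen n p2) ?leq_maxr //.
by rewrite -big_split; apply: eq_bigr => i _; rewrite coefD scalerDl.
Qed.

Lemma skew_mul0l (q : {poly K}) : 0 ** q = 0.
Proof. by rewrite /skew_mul size_poly0 big_ord0. Qed.

Lemma skew_mul0r (p : {poly K}) : p ** 0 = 0.
Proof. by rewrite /skew_mul big1 // => i _; rewrite iter_mulT0 scaler0. Qed.

Lemma skew_mulCl (c : K) (q : {poly K}) : c%:P ** q = c *: q.
Proof. by rewrite (@skew_mul_widen 1) ?size_polyC_leq1 // big_ord1 coefC. Qed.

Lemma skew_mul1l (q : {poly K}) : 1 ** q = q.
Proof. by rewrite -polyC1 skew_mulCl scale1r. Qed.

(* The top term p_(n-1) T^(n-1) q strictly dominates the others, sigma being injective. *)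
Lemma size_lead_skew_mul (p q : {poly K}) : p != 0 -> q != 0 ->
  size (p ** q) = (size p + size q).-1 /\
  lead_coef (p ** q) = lead_coef p * iter (size p).-1 sigma (lead_coef q).
Proof.
move=> p0 q0; have sq_gt0 : (0 < size q)%N by rewrite size_poly_gt0.
have sp : size p = (size p).-1.+1 by rewrite prednK // size_poly_gt0.
rewrite /skew_mul sp big_ord_recr /=; set n := (size p).-1.
have [s_top l_top] := size_lead_iter_mulT n q0.
have lp_reg : GRing.lreg p`_n by apply: neq0_lreg; rewrite -lead_coefE lead_coef_eq0.
have s_lead : size (p`_n *: iter n mulT q) = (size q + n)%N by rewrite lreg_size.
have lt_rest : (size (\sum_(i < n) p`_i *: iter i mulT q)%R < size (p`_n *: iter n mulT q))%N.
  rewrite s_lead; apply: (leq_ltn_trans (size_sum _ _ _)).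
  suff le_max : (\max_(i < n) size (p`_i *: iter i mulT q) <= (size q + n).-1)%N.
    by apply: (leq_ltn_trans le_max); rewrite prednK // addn_gt0 sq_gt0.
  apply/bigmax_leqP => i _; apply: (leq_trans (size_scale_leq _ _)).
  have [-> _] := size_lead_iter_mulT i q0.
  by rewrite -ltnS prednK ?ltn_add2l // addn_gt0 sq_gt0.
rewrite addrC size_polyDl // lead_coefDl // s_lead lead_coef_lreg // l_top.
by rewrite addnC -lead_coefE.
Qed.

Lemma size_skew_mul (p q : {poly K}) : p != 0 -> q != 0 ->
  size (p ** q) = (size p + size q).-1.
Proof. by move=> p0 q0; case: (size_lead_skew_mul p0 q0). Qed.

Lemma skew_mul_neq0 (p q : {poly K}) : p != 0 -> q != 0 -> p ** q != 0.
Proof.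
move=> p0 q0; rewrite -size_poly_eq0 size_skew_mul //.
by move: p0 q0; rewrite -!size_poly_gt0; lia.
Qed.

Lemma XsubC_neq0 (c : K) : 'X - c%:P != 0.
Proof. by rewrite -size_poly_eq0 size_XsubC. Qed.

Lemma size_skew_mul_XsubC (q : {poly K}) (c : K) : q != 0 ->
  size (q ** ('X - c%:P)) = (size q).+1.
Proof. by move=> q0; rewrite size_skew_mul ?XsubC_neq0 // size_XsubC addn2. Qed.

Lemma skew_unit_size (v : {poly K}) : skew_unit sigma delta v -> size v = 1%N.
Proof.
move=> [w [vw1 _]]; have [v0 w0] : v != 0 /\ w != 0.
  by split; apply: contra_eq_neq vw1 => ->; rewrite ?skew_mul0l ?skew_mul0r eq_sym oner_neq0.
move: (size_skew_mul v0 w0); rewrite vw1 size_poly1.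
by move: v0 w0; rewrite -!size_poly_gt0; lia.
Qed.

Lemma skew_division_step (p : {poly K}) (c : K) : (1 < size p)%N ->
  exists q, (size (p - q ** ('X - c%:P))%R < size p)%N.
Proof.
move=> sp_gt1; set m := (size p).-2.
have sp : size p = m.+2 by rewrite /m -subn2 -addn2 subnK.
have lp_reg : GRing.lreg (lead_coef p).
  by apply: neq0_lreg; rewrite lead_coef_eq0 -size_poly_gt0 sp.
set q := lead_coef p *: 'X^m.
have q0 : q != 0 by rewrite -size_poly_eq0 lreg_size ?size_polyXn.
have [sq lq] := size_lead_skew_mul q0 (XsubC_neq0 c).
rewrite lreg_size ?size_polyXn // size_XsubC addn2 in sq.
rewrite lead_coef_lreg // lead_coefXn mulr1 lreg_size ?size_polyXn //= in lq.
rewrite lead_coefXsubC iter_sigma1 mulr1 in lq.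
exists q; rewrite sp ltnS; apply/leq_sizeP => j le_j.
rewrite coefB; case: (ltngtP j m.+1) => [lt_j|gt_j|->].
- by move: le_j; rewrite leqNgt lt_j.
- by rewrite !nth_default ?subr0 ?sq ?sp.
- by rewrite lead_coefE sq /= in lq; rewrite lq [p`_m.+1](_ : _ = lead_coef p) ?subrr // lead_coefE sp.
Qed.

Lemma skew_division (p : {poly K}) (c : K) :
  exists q r, p = q ** ('X - c%:P) + r%:P.
Proof.
elim: {p}(size p) {-2}p (leqnn (size p)) => [|n IH] p sp.
  by exists 0, p`_0; rewrite skew_mul0l add0r -size1_polyC // (leq_trans sp).
have [sp_le1|sp_gt1] := leqP (size p) 1.
  by exists 0, p`_0; rewrite skew_mul0l add0r -size1_polyC.
have [q1 lt_p] := skew_division_step c sp_gt1.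
have [q2 [r e]] := IH _ (leq_trans lt_p sp).
by exists (q1 + q2), r; rewrite skew_mulDl -addrA -e addrC subrK.
Qed.

(* [plin a] is the pseudo-linear map T_a of K, and [plin_eval a p] is p(T_a);
   the link with the evaluation of the paper is [skew_eval_conj]. *)
Definition plin (a x : K) : K := sigma x * a + delta x.

Definition plin_eval (a : K) (p : {poly K}) (x : K) : K :=
  \sum_(k < size p) p`_k * iter k (plin a) x.

Lemma plin0 a : plin a 0 = 0.
Proof. by rewrite /plin rmorph0 mul0r delta0 addr0. Qed.

Lemma plinD a x y : plin a (x + y) = plin a x + plin a y.
Proof. by rewrite /plin rmorphD deltaD mulrDl addrACA. Qed.

Lemma plinN a x : plin a (- x) = - plin a x.
Proof. by rewrite /plin rmorphN deltaN mulNr opprD. Qed.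

Lemma plinM a c x : plin a (c * x) = sigma c * plin a x + delta c * x.
Proof. by rewrite /plin rmorphM deltaM mulrDr !mulrA addrA. Qed.

Lemma plin_sum a n (F : 'I_n -> K) : plin a (\sum_(i < n) F i) = \sum_(i < n) plin a (F i).
Proof. exact: (big_morph _ (plinD a) (plin0 a)). Qed.

Lemma iter_plin0 a k : iter k (plin a) 0 = 0.
Proof. by elim: k => //= k ->; rewrite plin0. Qed.

Lemma iter_plinD a k x y :
  iter k (plin a) (x + y) = iter k (plin a) x + iter k (plin a) y.
Proof. by elim: k => //= k ->; rewrite plinD. Qed.

Lemma plin_eval_widen n a (p : {poly K}) x : (size p <= n)%N ->
  plin_eval a p x = \sum_(k < n) p`_k * iter k (plin a) x.
Proof.
move=> le_pn; rewrite /plin_eval (big_ord_widen n (fun k => p`_k * iter k (plin a) x) le_pn).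
rewrite big_mkcond /=; apply: eq_bigr => i _.
by case: ifP => // /negbT; rewrite -leqNgt => h; rewrite nth_default // mul0r.
Qed.

Lemma plin_evalDl a (p q : {poly K}) x :
  plin_eval a (p + q) x = plin_eval a p x + plin_eval a q x.
Proof.
set n := maxn (size p) (size q).
rewrite (@plin_eval_widen n) ?(leq_trans (size_polyD _ _)) //.
rewrite (@plin_eval_widen n a p) ?leq_maxl // (@plin_eval_widen n a q) ?leq_maxr //.
by rewrite -big_split; apply: eq_bigr => i _; rewrite coefD mulrDl.
Qed.

Lemma plin_eval0l a x : plin_eval a 0 x = 0.
Proof. by rewrite /plin_eval size_poly0 big_ord0. Qed.

Lemma plin_eval_suml a n (F : 'I_n -> {poly K}) x :
  plin_eval a (\sum_(i < n) F i) x = \sum_(i < n) plin_eval a (F i) x.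
Proof. exact: (big_morph (plin_eval a ^~ x) (fun p q => plin_evalDl a p q x) (plin_eval0l a x)). Qed.

Lemma plin_evalZl a (c : K) (p : {poly K}) x : plin_eval a (c *: p) x = c * plin_eval a p x.
Proof.
rewrite (@plin_eval_widen (size p)) ?size_scale_leq // /plin_eval mulr_sumr.
by apply: eq_bigr => i _; rewrite coefZ mulrA.
Qed.

Lemma plin_evalCl a (c : K) x : plin_eval a c%:P x = c * x.
Proof. by rewrite (@plin_eval_widen 1) ?size_polyC_leq1 // big_ord1 coefC. Qed.

Lemma plin_eval_XsubC a (c : K) x : plin_eval a ('X - c%:P) x = plin a x - c * x.
Proof.
rewrite (@plin_eval_widen 2) ?size_XsubC // !big_ord_recl big_ord0 /=.
by rewrite !coefB !coefX !coefC /= sub0r subr0 mul1r addr0 addrC mulNr.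
Qed.

Lemma plin_eval0r a (p : {poly K}) : plin_eval a p 0 = 0.
Proof. by rewrite /plin_eval big1 // => i _; rewrite iter_plin0 mulr0. Qed.

Lemma plin_evalDr a (p : {poly K}) x y :
  plin_eval a p (x + y) = plin_eval a p x + plin_eval a p y.
Proof. by rewrite /plin_eval -big_split; apply: eq_bigr => i _; rewrite iter_plinD mulrDr. Qed.

Lemma plin_eval_sumr a (p : {poly K}) n (F : 'I_n -> K) :
  plin_eval a p (\sum_(i < n) F i) = \sum_(i < n) plin_eval a p (F i).
Proof. exact: (big_morph _ (plin_evalDr a p) (plin_eval0r a p)). Qed.

Lemma plin_eval_mulT a (q : {poly K}) x : plin_eval a (mulT q) x = plin a (plin_eval a q x).
Proof.
have [->|q0] := eqVneq q 0; first by rewrite mulT0 !plin_eval0l plin0.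
have [s_Tq _] := size_lead_mulT q0.
rewrite (@plin_eval_widen (size q).+1) ?s_Tq //.
under eq_bigr => k _ do rewrite coef_mulT mulrDl.
rewrite big_split /= big_ord_recl /= mul0r add0r [X in _ + X]big_ord_recr /=.
rewrite [q`_(size q)]nth_default // delta0 mul0r addr0 /plin_eval plin_sum.
by under [in RHS]eq_bigr => k _ do rewrite plinM; rewrite big_split.
Qed.

Lemma plin_eval_skew_mul a (p q : {poly K}) x :
  plin_eval a (p ** q) x = plin_eval a p (plin_eval a q x).
Proof.
rewrite /skew_mul plin_eval_suml [RHS]/plin_eval; apply: eq_bigr => i _.
rewrite plin_evalZl; congr (_ * _).
by elim: (i : nat) => //= k <-; rewrite plin_eval_mulT.
Qed.

Local Notation sdc := (sd_conj sigma delta).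
Local Notation Delta := (conj_class sigma delta).

Lemma sd_conjE b a : sdc b a = plin a b * b^-1.
Proof. by rewrite /sd_conj /plin mulrDl. Qed.

Lemma sd_conj_mul b a : b != 0 -> sdc b a * b = plin a b.
Proof. by move=> b0; rewrite sd_conjE divrK ?unit_neq0. Qed.

Lemma sd_conj1 z : sdc 1 z = z.
Proof. by rewrite sd_conjE invr1 mulr1 /plin rmorph1 mul1r delta1 addr0. Qed.

Lemma sd_conjM b1 b2 z : b1 != 0 -> b2 != 0 -> sdc b1 (sdc b2 z) = sdc (b1 * b2) z.
Proof.
move=> b10 b20; rewrite [RHS]sd_conjE -[LHS](mulrK (unit_neq0 (mul_neq0 b10 b20))).
congr (_ * _); rewrite mulrA sd_conj_mul // /plin mulrDl -mulrA sd_conj_mul //.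
by rewrite rmorphM deltaM /plin mulrDr !mulrA addrA.
Qed.

Lemma iter_plin_conj a b c k x : c * b = plin a b ->
  iter k (plin c) x * b = iter k (plin a) (x * b).
Proof.
move=> cb; elim: k => //= k <-.
by rewrite /plin mulrDl -mulrA cb -/(plin a b) -plinM.
Qed.

Lemma plin_eval_conj a b c (p : {poly K}) x : c * b = plin a b ->
  plin_eval c p x * b = plin_eval a p (x * b).
Proof.
move=> cb; rewrite /plin_eval mulr_suml; apply: eq_bigr => i _.
by rewrite -mulrA (iter_plin_conj _ _ cb).
Qed.

Lemma skew_eval_plin (p : {poly K}) c : skew_eval sigma delta p c = plin_eval c p 1.
Proof.
have [] := @epsilon_spec K (inhabits 0)
  (fun e => exists q, p = q ** ('X - c%:P) + e%:P).
  by have [q [r e]] := skew_division p c; exists r, q.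
rewrite -/(skew_eval sigma delta p c) => q {2}->.
rewrite plin_evalDl plin_eval_skew_mul plin_eval_XsubC plin_evalCl mulr1.
by rewrite /plin rmorph1 mul1r delta1 addr0 mulr1 subrr plin_eval0r add0r.
Qed.

Lemma skew_eval_conj a b (p : {poly K}) : b != 0 ->
  skew_eval sigma delta p (sdc b a) * b = plin_eval a p b.
Proof. by move=> b0; rewrite skew_eval_plin (plin_eval_conj _ _ (sd_conj_mul a b0)) mul1r. Qed.

Lemma skew_factor_theorem (p : {poly K}) c : skew_eval sigma delta p c = 0 ->
  exists q, p = q ** ('X - c%:P).
Proof.
have [q [r epr]] := skew_division p c; exists q.
move: H; rewrite skew_eval_plin {1}epr plin_evalDl plin_eval_skew_mul plin_evalCl.
rewrite plin_eval_XsubC /plin rmorph1 mul1r delta1 !mulr1 addr0 subrr plin_eval0r.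
by rewrite add0r => r0; rewrite epr r0 addr0.
Qed.

Lemma plin_eval_root_factor a b (p : {poly K}) : b != 0 -> plin_eval a p b = 0 ->
  exists q, p = q ** ('X - (sdc b a)%:P).
Proof.
move=> b0 pb0; apply: skew_factor_theorem.
by apply: (mulIr (unit_neq0 b0)); rewrite skew_eval_conj // pb0 mul0r.
Qed.

(* [centr a e] says e = 0 or ^e a = a, i.e. e lies in the (sigma,delta)-centralizer C(a). *)
Definition centr (a e : K) : Prop := plin a e = a * e.

Lemma centr0 a : centr a 0.
Proof. by rewrite /centr plin0 mulr0. Qed.

Lemma centr1 a : centr a 1.
Proof. by rewrite /centr /plin rmorph1 mul1r delta1 addr0 mulr1. Qed.

Lemma centrN a e : centr a e -> centr a (- e).
Proof. by rewrite /centr plinN mulrN => ->. Qed.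

Lemma centrV a e : centr a e -> centr a e^-1.
Proof.
have [->|e0] := eqVneq e 0; first by rewrite invr0.
rewrite /centr /plin => ce; have ue := unit_neq0 e0.
have se_reg : GRing.lreg (sigma e) by apply/neq0_lreg/sigma_neq0.
have dV : sigma e * delta e^-1 = - (delta e * e^-1).
  by apply/eqP; rewrite -addr_eq0 -deltaM mulrV // delta1.
apply: se_reg; rewrite mulrDr dV mulrA -rmorphM mulrV // rmorph1 mul1r mulrA.
by rewrite -[sigma e * a](addrK (delta e)) ce mulrBl mulrK // subrK.
Qed.

Lemma plin_centr a x e : centr a e -> plin a (x * e) = plin a x * e.
Proof. by rewrite /centr => ce; rewrite plinM ce /plin mulrDl !mulrA. Qed.

Lemma plin_eval_centr a (p : {poly K}) x e : centr a e ->
  plin_eval a p (x * e) = plin_eval a p x * e.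
Proof.
move=> ce; rewrite /plin_eval mulr_suml; apply: eq_bigr => i _.
by rewrite -mulrA; congr (_ * _); elim: (i : nat) => //= k ->; rewrite plin_centr.
Qed.

Lemma sd_conj_centr a e : e != 0 -> centr a e -> sdc e a = a.
Proof. by move=> e0 ce; rewrite sd_conjE ce mulrK ?unit_neq0. Qed.

Lemma centr_divl a c v z : v != 0 -> c * v = plin a v -> c * z = plin a z ->
  centr a (v^-1 * z).
Proof.
move=> v0 cv cz; set e := v^-1 * z.
have ze : z = v * e by rewrite /e mulVKr ?unit_neq0.
move: cz; rewrite ze plinM mulrA cv /plin mulrDl => ev.
apply: (neq0_lreg (sigma_neq0 v0)); apply: (addIr (delta v * e)).
by rewrite mulrA -ev.
Qed.

Definition rdep (a : K) (n : nat) (y : nat -> K) : Prop :=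
  exists d : nat -> K, (forall i, (i < n)%N -> centr a (d i)) /\
    (exists2 i, (i < n)%N & d i != 0) /\ \sum_(i < n) y i * d i = 0.

Lemma rdep_last0 a n (y : nat -> K) : y n = 0 -> rdep a n.+1 y.
Proof.
move=> yn0; exists (fun i => (i == n)%:R); split.
  by move=> i _; case: (i == n); [apply: centr1 | apply: centr0].
split; first by exists n; rewrite ?eqxx ?oner_neq0.
rewrite big_ord_recr /= yn0 mul0r addr0 big1 // => i _.
by rewrite ltn_eqF ?mulr0.
Qed.

(* The kernel of p(T_a) has right C(a)-dimension less than size p: peel off one
   root at a time with the factor theorem, as for ordinary polynomials. *)
Lemma plin_eval_kernel_rdep a n : forall (R : {poly K}) (y : nat -> K),
  size R = n.+1 -> (forall i, (i <= n)%N -> plin_eval a R (y i) = 0) -> rdep a n.+1 y.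
Proof.
elim: n => [|n IH] R y sR Ry0.
  apply: rdep_last0; have /size1_polyC eR := eq_leq sR.
  have R00 : R`_0 != 0 by apply: contra_eq_neq sR => R00; rewrite eR R00 size_poly0.
  by apply/eqP; rewrite -(mulrI_eq0 _ (neq0_lreg R00)) -(plin_evalCl a) -eR Ry0.
have [yn0|v0] := eqVneq (y n.+1) 0; first exact: rdep_last0.
set v := y n.+1 in v0; set c := sdc v a; set Xc := 'X - c%:P.
have [R' eR] := plin_eval_root_factor v0 (Ry0 _ (leqnn _)).
have R'0 : R' != 0 by apply: contra_eq_neq sR => R'0; rewrite eR R'0 skew_mul0l size_poly0.
have sR' : size R' = n.+1 by move: sR; rewrite eR size_skew_mul_XsubC // => -[].
have R'y0 i : (i <= n)%N -> plin_eval a R' (plin_eval a Xc (y i)) = 0.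
  by move=> le_in; rewrite -plin_eval_skew_mul -eR Ry0 // leqW.
have [d [dC [[i0 lt_i0 di0] sum0]]] := IH R' _ sR' R'y0.
set z := \sum_(i < n.+1) y i * d i.
have cz : c * z = plin a z.
  apply/eqP; rewrite eq_sym -subr_eq0 -plin_eval_XsubC -[0]sum0 plin_eval_sumr.
  by apply/eqP/eq_bigr => i _; rewrite plin_eval_centr //; apply: dC.
have Ce := centr_divl v0 (sd_conj_mul a v0) cz.
exists (fun i => if i == n.+1 then - (v^-1 * z) else d i); split.
  move=> i; rewrite ltnS leq_eqVlt; case: eqP => [_ _|_ /= lt_in]; first exact: centrN.
  exact: dC.
split; first by exists i0; rewrite ?ltn_eqF // leqW.
rewrite big_ord_recr /= eqxx (eq_bigr (fun i : 'I_n.+1 => y i * d i)).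
  by rewrite -/z mulrN mulVKr ?unit_neq0 // subrr.
by move=> i _; rewrite ltn_eqF.
Qed.

Lemma sd_algebraic_rdep a : sd_algebraic sigma delta a -> exists M, forall y, rdep a M y.
Proof.
move=> [G [G0 GDelta0]]; exists (size G) => y.
have sG : size G = (size G).-1.+1 by rewrite prednK // size_poly_gt0.
rewrite sG; apply: (plin_eval_kernel_rdep sG) => i _.
have [->|b0] := eqVneq (y i) 0; first exact: plin_eval0r.
by rewrite -skew_eval_conj // GDelta0 ?mul0r //; exists (y i).
Qed.

Lemma rdep_threshold a M : (forall y, rdep a M y) ->
  exists r (y : nat -> K), ~ rdep a r y /\ forall y', rdep a r.+1 y'.
Proof.
move=> depM; apply: NNPP => no_r.
suff indep k : exists y, ~ rdep a k y by have [y] := indep M; apply.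
elim: k => [|k [y indep_y]]; first by exists (fun _ => 0) => -[d [_ [[]]]].
apply: not_all_ex_not => dep_all; apply: no_r; by exists k, y.
Qed.

Lemma centr_linear_surj a (f : K -> K) M : (forall y, rdep a M y) ->
  (forall x y, f (x + y) = f x + f y) ->
  (forall x e, centr a e -> f (x * e) = f x * e) ->
  (forall x, f x = 0 -> x = 0) -> forall t, exists x, f x = t.
Proof.
move=> depM fD fC f_inj t.
have f0 : f 0 = 0 by apply: (addrI (f 0)); rewrite -fD !addr0.
have fN x : f (- x) = - f x by apply/eqP; rewrite -addr_eq0 -fD addNr f0.
have [r [y [indep_y dep_r1]]] := rdep_threshold depM.
have [d [dC [[i0 lt_i0 di0] sum0]]] := dep_r1 (fun i => if (i < r)%N then f (y i) else t).
have f_comb : \sum_(i < r) f (y i) * d i = f (\sum_(i < r) y i * d i).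
  rewrite (big_morph f fD f0); apply: eq_bigr => i _.
  by rewrite fC //; apply/dC/leqW.
move: sum0; rewrite big_ord_recr /= ltnn.
under eq_bigr => i _ do rewrite ltn_ord.
rewrite f_comb; have [dr0|dr0] := eqVneq (d r) 0.
  rewrite dr0 mulr0 addr0 => /f_inj comb0; exfalso; apply: indep_y.
  exists d; split; first by move=> i lt_ir; apply/dC/leqW.
  split=> //; exists i0 => //.
  by move: lt_i0; rewrite ltnS leq_eqVlt => /predU1P [eri0|//]; rewrite eri0 dr0 eqxx in di0.
move=> /eqP; rewrite addrC addr_eq0 => /eqP td.
exists ((- \sum_(i < r) y i * d i) * (d r)^-1).
by rewrite fC ?fN -?td ?mulrK ?unit_neq0 //; apply/centrV/dC.
Qed.

Lemma skew_invertible_of_conj_bij a (f : K -> K) :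
  (forall z, Delta a z -> f z != 0) ->
  (forall z z', Delta a z -> Delta a z' -> sdc (f z) z = sdc (f z') z' -> z = z') ->
  (forall w, Delta a w -> exists2 z, Delta a z & sdc (f z) z = w) ->
  skew_invertible sigma delta a f.
Proof.
move=> fz0 f_inj f_surj.
pose pre w := epsilon (inhabits 0) (fun z => Delta a z /\ sdc (f z) z = w).
have preP w : Delta a w -> Delta a (pre w) /\ sdc (f (pre w)) (pre w) = w.
  move=> Dw; apply: (epsilon_spec (inhabits 0) (fun z => Delta a z /\ sdc (f z) z = w)).
  by have [z Dz fzw] := f_surj w Dw; exists z.
exists (fun w => (f (pre w))^-1) => z Dz; rewrite /skew_prod.
have [Dz' fz'] := preP z Dz; set z' := pre z in Dz' fz' *.
have fz'0 := fz0 _ Dz'; split.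
  rewrite invr_eq0 (negPf fz'0) -[in sdc _ z]fz' sd_conjM ?invr_eq0 //.
  by rewrite mulVr ?unit_neq0 // sd_conj1 mulrV ?unit_neq0.
have fz_neq0 := fz0 z Dz; rewrite (negPf fz_neq0).
have Dfz : Delta a (sdc (f z) z).
  case: Dz fz_neq0 => b b0 -> fz_neq0.
  by exists (f (sdc b a) * b); rewrite ?mul_neq0 ?sd_conjM.
have [Dp fp] := preP _ Dfz.
by rewrite (f_inj _ _ Dp Dz fp) mulVr ?unit_neq0.
Qed.

(* Along Delta(a), z = ^b a is sent by z |-> ^(Q(z)) z to ^(Q(T_a) b) a. *)
Lemma skew_invertible_skew_eval a (Q : {poly K}) :
  (forall x, plin_eval a Q x = 0 -> x = 0) -> (forall t, exists x, plin_eval a Q x = t) ->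
  skew_invertible sigma delta a (skew_eval sigma delta Q).
Proof.
move=> Q_inj Q_surj; set f := skew_eval sigma delta Q; set Psi := plin_eval a Q.
have Psi_neq0 b : b != 0 -> Psi b != 0 by apply: contra_neq => /Q_inj.
have fb b : b != 0 -> f (sdc b a) * b = Psi b by apply: skew_eval_conj.
have fz0 z : Delta a z -> f z != 0.
  case=> b b0 ->; apply: contra_neq (Psi_neq0 b b0) => fz0.
  by rewrite -fb // fz0 mul0r.
have f_conj b : b != 0 -> sdc (f (sdc b a)) (sdc b a) = sdc (Psi b) a.
  by move=> b0; rewrite sd_conjM ?fb //; apply: fz0; exists b.
apply: skew_invertible_of_conj_bij => // [z z' [b b0 ->] [b' b'0 ->]|w [c c0 ->]].
  rewrite !f_conj // => e_conj.
  have Ce := centr_divl (Psi_neq0 b b0) (sd_conj_mul a (Psi_neq0 b b0))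
    (etrans (congr1 (fun w => w * Psi b') e_conj) (sd_conj_mul a (Psi_neq0 b' b'0))).
  set e := (Psi b)^-1 * Psi b' in Ce.
  have b'E : b' = b * e.
    apply/eqP; rewrite -subr_eq0; apply/eqP/Q_inj.
    rewrite plin_evalDr -mulrN plin_eval_centr; last exact: centrN.
    by rewrite -/Psi mulrN /e mulVKr ?unit_neq0 ?Psi_neq0 // subrr.
  have e0 : e != 0 by apply: contra_neq b'0 => e0; rewrite b'E e0 mulr0.
  by rewrite b'E -sd_conjM // (sd_conj_centr e0 Ce).
have [x xc] := Q_surj c; rewrite -/Psi in xc.
have x0 : x != 0 by apply: contra_neq c0 => x0; rewrite -xc x0 /Psi plin_eval0r.
by exists (sdc x a); [exists x | rewrite f_conj // xc].
Qed.

Lemma lfrac_eq_neq0 (A B P Q : {poly K}) : B != 0 ->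
  lfrac_eq sigma delta A B P Q -> Q != 0.
Proof.
move=> B0 [U [V [_ [UA0 UBVQ]]]].
have U0 : U != 0 by apply: contra_neq UA0 => ->; rewrite skew_mul0l.
by apply: contra_neq (skew_mul_neq0 U0 B0) => Q0; rewrite UBVQ Q0 skew_mul0r.
Qed.

Lemma lfrac_eq_size (A B P Q : {poly K}) : A != 0 -> B != 0 -> P != 0 ->
  lfrac_eq sigma delta A B P Q -> (size A + size Q = size P + size B)%N.
Proof.
move=> A0 B0 P0 eqAP; have Q0 := lfrac_eq_neq0 B0 eqAP.
case: eqAP => U [V [UAVP [UA0 UBVQ]]].
have U0 : U != 0 by apply: contra_neq UA0 => ->; rewrite skew_mul0l.
have V0 : V != 0 by apply: contra_neq UA0 => V0; rewrite UAVP V0 skew_mul0l.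
move: (congr1 (size : {poly K} -> nat) UAVP) (congr1 (size : {poly K} -> nat) UBVQ).
rewrite !size_skew_mul //.
by move: U0 V0 A0 B0 P0 Q0; rewrite -!size_poly_gt0; lia.
Qed.

Lemma minimal_rep_monic (A : {poly K}) : A != 0 ->
  minimal_rep sigma delta A 1 ((lead_coef A)^-1 *: A) ((lead_coef A)^-1)%:P.
Proof.
move=> A0; have li_reg : GRing.lreg (lead_coef A)^-1.
  by apply/neq0_lreg; rewrite invr_eq0 lead_coef_eq0.
split; first by rewrite monicE lead_coef_lreg // mulVr ?unit_neq0 ?lead_coef_eq0.
split.
  exists ((lead_coef A)^-1)%:P, 1.
  rewrite !skew_mul1l !skew_mulCl -[_ *: 1]/(_%:A) alg_polyC.
  by do !split; rewrite -size_poly_eq0 lreg_size ?size_poly_eq0.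
move=> P' Q' P'0 eqAP'; have := lfrac_eq_neq0 (oner_neq0 _) eqAP'.
move: (lfrac_eq_size A0 (oner_neq0 _) P'0 eqAP'); rewrite lreg_size // size_poly1.
by rewrite -size_poly_gt0; lia.
Qed.

Lemma plin_eval_irreducible_inj a (P : {poly K}) :
  skew_irreducible sigma delta P -> (2 < size P)%N ->
  forall x, plin_eval a P x = 0 -> x = 0.
Proof.
move=> [P0 [_ P_irr]] sP x Px0; have [//|x0] := eqVneq x 0; exfalso.
have [R eR] := plin_eval_root_factor x0 Px0.
have R0 : R != 0 by apply: contra_neq P0 => R0; rewrite eR R0 skew_mul0l.
have [/skew_unit_size sR|/skew_unit_size] := P_irr _ _ eR; last by rewrite size_XsubC.
by move: sP; rewrite eR size_skew_mul_XsubC // sR.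
Qed.

End SkewPolynomials.

Theorem corollary3p5 (K : unitRingType) (sigma : {rmorphism K -> K}) (delta : K -> K)
  (hK : skew_field K) (hdelta : sigma_derivation sigma delta)
  (halg : forall a : K, sd_algebraic sigma delta a) :
  forall P : {poly K}, skew_irreducible sigma delta P -> (2 < size P)%N ->
  forall a : K, defined_at sigma delta P 1 a.
Proof.
move=> P P_irr sP a; have P0 : P != 0 by case: P_irr.
set l := lead_coef P; have l0 : l != 0 by rewrite lead_coef_eq0.
exists (l^-1 *: P), (l^-1)%:P; split; first exact: minimal_rep_monic.
have P_inj := plin_eval_irreducible_inj hK hdelta (a := a) P_irr sP.
have P0_inj x : plin_eval sigma delta a (l^-1 *: P) x = 0 -> x = 0.
  rewrite plin_evalZl => /eqP; rewrite (mulrI_eq0 _ (neq0_lreg hK _)) ?invr_eq0 //.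
  by move/eqP/P_inj.
apply: skew_invertible_skew_eval => //.
have [M depM] := sd_algebraic_rdep hK hdelta (halg a).
apply: (centr_linear_surj hK hdelta depM _ _ P0_inj) => [x y|x e]; first exact: plin_evalDr.
exact: plin_eval_centr.
Qed.
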